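(* For any entrywise nonnegative ${\mathbf\Lambda},{\mathbf V}$ and any $\alpha>0$, $$\sqrt{\sum_{\ell\in[\![L]\!],\,s\in[K]}\big(\mathcal U_s(\hat\pi_{{\mathbf\Lambda},{\mathbf V}},\ell)-\epsilon_s\big)_+^2}\le\|\mathbf G_{\hat F,\alpha}({\mathbf\Lambda},{\mathbf V})\|+\big(\mathbb E\|\hat{\mathbf t}(X)-\mathbf t(X)\|^2\big)^{1/2}.$$
   Context: Let $K\ge 2$, $d\ge1$, and let $(X,S,Y)$ be a random triple with values in $\mathbb R^d\times[K]\times\mathbb R$. Put $p_s=\mathbb P(S=s)>0$, $\tau_s(x)=\mathbb P(S=s\mid X=x)$, $t_s(x)=1-\tau_s(x)/p_s$, $\mathbf t=(t_s)_{s\in[K]}$. Fix $B>0$, $L\in\mathbb N$, $\beta>0$, $\boldsymbol\epsilon=(\epsilon_s)\in[0,1]^K$, $[\![L]\!]=\{-L,\dots,L\}$. Let $\hat\eta:\mathbb R^d\to\mathbb R$ and $\hat{\boldsymbol\tau}=(\hat\tau_s)_{s}:\mathbb R^d\to[0,1]^K$ be fixed (deterministic) measurable functions with $\mathbb E[\hat\eta(X)^2]<\infty$; set $\hat t_s(x)=1-\hat\tau_s(x)/p_s$, $\hat{\mathbf t}=(\hat t_s)_s$, $\hat r_\ell(x)=(\hat\eta(x)-\ell B/L)^2$. $\mathrm{LSE}_\beta(\mathbf w)=\beta^{-1}\log\sum_j e^{\beta w_j}$, $\sigma_j(\mathbf w)=e^{w_j}/\sum_ie^{w_i}$. For ${\mathbf\Lambda}=(\lambda_{\ell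 s}),{\mathbf V}=(\nu_{\ell s})$ with rows $\boldsymbol\lambda_\ell,\boldsymbol\nu_\ell\in\mathbb R^K$: $\hat F({\mathbf\Lambda},{\mathbf V})=\mathbb E\big[\mathrm{LSE}_\beta\big((\langle\boldsymbol\lambda_\ell-\boldsymbol\nu_\ell,\hat{\mathbf t}(X)\rangle-\hat r_\ell(X))_{\ell\in[\![L]\!]}\big)\big]+\sum_\ell\langle\boldsymbol\lambda_\ell+\boldsymbol\nu_\ell,\boldsymbol\epsilon\rangle$ and $\hat\pi_{{\mathbf\Lambda},{\mathbf V}}(\ell\mid x)=\sigma_\ell\big(\beta(\langle\boldsymbol\lambda_{\ell'}-\boldsymbol\nu_{\ell'},\hat{\mathbf t}(x)\rangle-\hat r_{\ell'}(x))_{\ell'\in[\![L]\!]}\big)$, a randomized prediction putting mass $\hat\pi_{{\mathbf\Lambda},{\mathbf V}}(\ell\mid x)$ on $\ell B/L$. For such a grid-supported $\pi$, $\mathcal U_s(\pi,\ell)=|\mathbb E[\pi(\ell\mid X)\mid S=s]-\mathbb E[\pi(\ell\mid X)]|$. $(a)_+=\max(a,0)$ entrywise; gradient mapping $\mathbf G_{\hat F,\alpha}({\mathbf\Lambda},{\mathbf V})=\alpha^{-1}[({\mathbf\Lambda},{\mathbf V})-(({\mathbf\Lambda},{\mathbf V})-\alpha\nabla\hat F({\mathbf\Lambda},{\mathbf V}))_+]$; $\|\cdot\|$ is the Euclidean norm. *)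

From HB Require Import structures.
From mathcomp Require Import all_boot all_order all_algebra.
From mathcomp Require Import all_classical all_reals all_analysis.
Set Implicit Arguments. Unset Strict Implicit. Unset Printing Implicit Defensive.
Import Order.TTheory GRing.Theory Num.Theory.
Import numFieldNormedType.Exports.
Local Open Scope classical_set_scope.
Local Open Scope ring_scope.

(* Conventions:
   - [K] is 'I_K, the grid index set [[L]] = {-L,...,L} is 'I_(2L+1),
     the index l : 'I_(2L+1) standing for the integer l - L.
   - R^d is d.-tuple R with its product (= Borel) sigma-algebra.
   - matrices Lambda, V : 'M[R]_(2L+1, K), row l = lambda_l, column s.  *)

Section defs.
Variables (R : realType) (dT : measure_display) (T : measurableType dT)
          (P : probability T R).

Definition Ex (f : T -> R) : R := fine (\int[P]_w (f w)%:E).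

Definition indic (b : bool) : R := if b then 1 else 0.

Definition gridv (L : nat) (B : R) (l : 'I_(2 * L + 1)) : R :=
  ((l%:R - L%:R) * B) / L%:R.

Definition LSE (n : nat) (beta : R) (w : 'I_n -> R) : R :=
  beta^-1 * ln (\sum_(j < n) expR (beta * w j)).

Definition softmax (n : nat) (w : 'I_n -> R) (j : 'I_n) : R :=
  expR (w j) / \sum_(i < n) expR (w i).

Variables (d K L : nat) (B beta : R) (eps : 'I_K -> R) (p : 'I_K -> R)
  (etah : d.-tuple R -> R) (tauh : 'I_K -> d.-tuple R -> R).

Definition that (s : 'I_K) (x : d.-tuple R) : R := 1 - tauh s x / p s.

Definition rhat (l : 'I_(2 * L + 1)) (x : d.-tuple R) : R :=
  (etah x - gridv B l) ^+ 2.

Definition scorev (Lam V : 'M[R]_(2 * L + 1, K)) (x : d.-tuple R)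
  (l : 'I_(2 * L + 1)) : R :=
  \sum_(s < K) (Lam l s - V l s) * that s x - rhat l x.

Variable X : T -> d.-tuple R.

Definition Fhat (Lam V : 'M[R]_(2 * L + 1, K)) : R :=
  Ex (fun w => LSE beta (scorev Lam V (X w)))
  + \sum_(l < 2 * L + 1) \sum_(s < K) (Lam l s + V l s) * eps s.

Definition pihat (Lam V : 'M[R]_(2 * L + 1, K)) (l : 'I_(2 * L + 1))
  (x : d.-tuple R) : R :=
  softmax (fun l' => beta * scorev Lam V x l') l.

Variable S : T -> 'I_K.

(* U_s(pi, l) = | E[pi(l|X) | S = s] - E[pi(l|X)] |, with
   E[Z | S = s] = E[Z 1{S=s}] / P(S=s) *)
Definition Ufair (pi : 'I_(2 * L + 1) -> d.-tuple R -> R) (s : 'I_K)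
  (l : 'I_(2 * L + 1)) : R :=
  `| Ex (fun w => pi l (X w) * indic (S w == s)) / p s
     - Ex (fun w => pi l (X w)) |.

Definition dF_lam (Lam V : 'M[R]_(2 * L + 1, K)) l s : R :=
  derive1 (fun h : R => Fhat (Lam + h *: delta_mx l s) V) 0.
Definition dF_nu (Lam V : 'M[R]_(2 * L + 1, K)) l s : R :=
  derive1 (fun h : R => Fhat Lam (V + h *: delta_mx l s)) 0.

Definition Gmap_lam (alpha : R) (Lam V : 'M[R]_(2 * L + 1, K)) l s : R :=
  alpha^-1 * (Lam l s - Num.max (Lam l s - alpha * dF_lam Lam V l s) 0).
Definition Gmap_nu (alpha : R) (Lam V : 'M[R]_(2 * L + 1, K)) l s : R :=
  alpha^-1 * (V l s - Num.max (V l s - alpha * dF_nu Lam V l s) 0).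

Definition Gmap_norm (alpha : R) (Lam V : 'M[R]_(2 * L + 1, K)) : R :=
  Num.sqrt (\sum_(l < 2 * L + 1) \sum_(s < K)
              (Gmap_lam alpha Lam V l s ^+ 2 + Gmap_nu alpha Lam V l s ^+ 2)).

End defs.

From Pilot Require Import Defs.
From HB Require Import structures.
From mathcomp Require Import all_boot all_order all_algebra.
From mathcomp Require Import all_classical all_reals all_analysis.
From mathcomp Require Import measurable_realfun ring lra.
Set Implicit Arguments. Unset Strict Implicit. Unset Printing Implicit Defensive.
Import Order.TTheory GRing.Theory Num.Theory.
Import numFieldNormedType.Exports.
Local Open Scope classical_set_scope.
Local Open Scope ring_scope.
Import HBNNSimple.

(* Differentiating the log-sum-exp term gives dF/dlambda_ls = E[pi(l|X) that_s(X)] + eps_s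
   and dF/dnu_ls = -E[pi(l|X) that_s(X)] + eps_s, while the tower property for tau_s
   turns the fairness gap into U_s(pi, l) = |E[pi(l|X) t_s(X)]|.  At a nonnegative
   point, whenever |E[pi that_s]| > eps_s one of these two partial derivatives is
   negative, its projected step is inactive, and so (|E[pi that_s]| - eps_s)_+ is
   bounded by the (l, s) block of the gradient mapping.  Replacing that by t costs
   |E[pi (that_s - t_s)]|, and by Jensen and sum_l pi(l|X) = 1 these errors have
   squared sum at most E ||that - t||^2; Minkowski's inequality combines the two. *)

Section exp_ln_bounds.
Variable R : realType.

Lemma expR_sub1_sub_le (u : R) : expR u - 1 - u <= `|u| * (expR `|u| - 1).
Proof.
have hEN := expRxMexpNx_1 u; have hE := expR_gt0 u; have hEN0 := expR_gt0 (- u).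
have h := expR_ge1Dx (- u).
have [u0|u0] := leP 0 u; [rewrite ger0_norm // | rewrite ltr0_norm //]; nra.
Qed.

Lemma ln_ge1_subV (z : R) : 0 < z -> 1 - z^-1 <= ln z.
Proof.
move=> z0; have zV0 : 0 < z^-1 by rewrite invr_gt0.
have : ln (1 + (z^-1 - 1)) <= z^-1 - 1 by apply: le_ln1Dx; lra.
by rewrite addrC subrK lnV ?posrE //; lra.
Qed.

(* Squeeze ln z, z = 1 + q (e^u - 1), between q (1 - e^-u) (from ln z >= 1 - 1/z)
   and q (e^u - 1) (from ln z <= z - 1); both are within |u| (e^|u| - 1) of q u. *)
Lemma ln_mix_expR_err (q y beta : R) : 0 <= q <= 1 -> 0 < beta ->
  `| beta^-1 * ln (1 + q * (expR (beta * y) - 1)) - q * y |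
    <= `|y| * (expR (beta * `|y|) - 1).
Proof.
move=> /andP[q0 q1] b0.
set u := beta * y; set E := expR u; set z := 1 + q * (E - 1).
have E0 : 0 < E by apply: expR_gt0.
have qE0 : 0 <= q * E by rewrite mulr_ge0 // ltW.
have z0 : 0 < z by rewrite /z; nra.
have ln_le : ln z <= q * (E - 1) by apply: le_ln1Dx; nra.
have ln_ge : q * (1 - expR (- u)) <= ln z.
  apply: le_trans (ln_ge1_subV z0); rewrite -subr_ge0.
  have -> : 1 - z^-1 - q * (1 - expR (- u))
      = q * (1 - q) * (E - 1) ^+ 2 * expR (- u) / z.
    rewrite expRN -/E /z; field.
    by rewrite gt_eqF //= -/z gt_eqF.
  have q1q : 0 <= q * (1 - q) by rewrite mulr_ge0 // subr_ge0.
  by rewrite divr_ge0 ?(ltW z0) // mulr_ge0 ?expR_ge0 // mulr_ge0 ?sqr_ge0.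
set C := `|u| * (expR `|u| - 1).
have C0 : 0 <= C.
  by rewrite mulr_ge0 // subr_ge0 -expR0 ler_expR.
have qC w : w <= C -> q * w <= C.
  move=> wC; have [w0|w0] := leP 0 w; last by apply: le_trans C0; nra.
  by apply: le_trans wC; rewrite ler_piMl.
have up := qC _ (expR_sub1_sub_le u).
have lo := expR_sub1_sub_le (- u); rewrite normrN -/C in lo; move/qC in lo.
have key : `|ln z - q * u| <= C.
  by rewrite ler_norml; apply/andP; split; rewrite /E in ln_le up; lra.
have bV0 : 0 < beta^-1 by rewrite invr_gt0.
have hy : y = beta^-1 * u by rewrite /u mulKf ?gt_eqF.
have -> : beta^-1 * ln z - q * y = beta^-1 * (ln z - q * u) by rewrite hy; ring.
have -> : `|y| * (expR (beta * `|y|) - 1) = beta^-1 * C.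
  by rewrite /C /u normrM (gtr0_norm b0) !mulrA mulVf ?gt_eqF // mul1r.
by rewrite normrM gtr0_norm // ler_pM2l.
Qed.

End exp_ln_bounds.

Section softmax_LSE.
Variables (R : realType) (n : nat).
Implicit Types (w : 'I_n -> R) (beta : R).

Lemma sum_expR_gt0 w (j : 'I_n) : 0 < \sum_(i < n) expR (w i).
Proof.
rewrite (bigD1 j) //= ltr_pwDl ?expR_gt0 //.
by rewrite sumr_ge0 // => i _; apply: expR_ge0.
Qed.

Lemma softmax_ge0 w j : 0 <= softmax w j.
Proof. by rewrite divr_ge0 ?expR_ge0 ?sumr_ge0 // => i _; apply: expR_ge0. Qed.

Lemma softmax_sum1 w (j : 'I_n) : \sum_(i < n) softmax w i = 1.
Proof. by rewrite -mulr_suml mulfV // gt_eqF // (sum_expR_gt0 _ j). Qed.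

Lemma softmax_le1 w j : softmax w j <= 1.
Proof.
rewrite -(softmax_sum1 w j) (bigD1 j) //= lerDl.
by rewrite sumr_ge0 // => i _; apply: softmax_ge0.
Qed.

Lemma LSE_shift beta w (j : 'I_n) (y : R) : 0 < beta ->
  LSE beta (fun i => w i + (i == j)%:R * y) - LSE beta w
  = beta^-1 * ln (1 + softmax (fun i => beta * w i) j * (expR (beta * y) - 1)).
Proof.
move=> b0; set Z := \sum_(i < n) expR (beta * w i).
have Z0 : 0 < Z by exact: sum_expR_gt0 j.
have q1 := softmax_le1 (fun i => beta * w i) j.
have q0 := softmax_ge0 (fun i => beta * w i) j.
set q := softmax _ j in q0 q1 *.
have z0 : 0 < 1 + q * (expR (beta * y) - 1).
  have [->|qn0] := eqVneq q 0; first by rewrite mul0r addr0.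
  have : 0 < q * expR (beta * y) by rewrite mulr_gt0 ?expR_gt0 // lt_def qn0.
  rewrite mulrBr mulr1; lra.
rewrite /LSE.
have -> : \sum_(i < n) expR (beta * (w i + (i == j)%:R * y))
          = Z * (1 + q * (expR (beta * y) - 1)).
  rewrite (bigD1 j) //= eqxx mul1r /Z [in RHS](bigD1 j) //=.
  rewrite (eq_bigr (fun i => expR (beta * w i))); last first.
    by move=> i /negPf ->; rewrite mul0r addr0.
  rewrite /q /softmax -/Z mulrDr expRD.
  have : Z != 0 by rewrite gt_eqF.
  by rewrite /Z (bigD1 j) //=; set r := \sum_(i < n | i != j) _ => hZ; field.
by rewrite lnM ?posrE //; ring.
Qed.

Lemma normr_LSE_le beta w (j : 'I_n) : 0 < beta ->
  `|LSE beta w| <= beta^-1 * ln n%:R + \sum_(i < n) `|w i|.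
Proof.
move=> b0; set M := \sum_(i < n) `|w i|; set Z := \sum_(i < n) expR (beta * w i).
have wM i : `|w i| <= M by rewrite /M (bigD1 i) //= lerDl sumr_ge0.
have Z0 : 0 < Z by exact: sum_expR_gt0 j.
have n1 : 1 <= n%:R :> R by rewrite ler1n (leq_ltn_trans _ (ltn_ord j)).
have n0 : 0 < n%:R :> R by apply: lt_le_trans n1.
have Z_le : Z <= n%:R * expR (beta * M).
  apply: (@le_trans _ _ (\sum_(i < n) expR (beta * M))).
    by rewrite ler_sum // => i _; rewrite ler_expR ler_pM2l // (le_trans (ler_norm _)).
  by rewrite sumr_const card_ord mulr_natl.
have Z_ge : expR (- (beta * M)) <= Z.
  apply: (le_trans _ (_ : expR (beta * w j) <= Z)).
    by rewrite ler_expR -mulrN ler_pM2l // lerNl (le_trans _ (wM j)) // -normrN ler_norm.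
  by rewrite /Z (bigD1 j) //= lerDl sumr_ge0 // => i _; apply: expR_ge0.
have lnZ_le : ln Z <= ln n%:R + beta * M.
  rewrite -[X in _ <= _ + X]expRK -lnM ?posrE ?expR_gt0 //.
  by rewrite ler_ln ?posrE ?mulr_gt0 ?expR_gt0.
have lnZ_ge : - (beta * M) <= ln Z by rewrite -[X in X <= _]expRK ler_ln ?posrE ?expR_gt0 //.
have lnn0 : 0 <= beta^-1 * ln n%:R by rewrite mulr_ge0 ?ln_ge0 // invr_ge0 ltW.
have bM : beta^-1 * (beta * M) = M by rewrite mulKf ?gt_eqF.
rewrite /LSE -/Z ler_norml; apply/andP; split.
- have : beta^-1 * (- (beta * M)) <= beta^-1 * ln Z by rewrite ler_pM2l ?invr_gt0.
  by rewrite mulrN bM; lra.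
- have : beta^-1 * ln Z <= beta^-1 * (ln n%:R + beta * M) by rewrite ler_pM2l ?invr_gt0.
  by rewrite mulrDr bM; lra.
Qed.

End softmax_LSE.

Section euclidean_norm.
Variables (R : realType) (I : finType).
Implicit Types x y : I -> R.

Lemma cauchy_schwarz_sum x y :
  (\sum_i x i * y i) ^+ 2 <= (\sum_i x i ^+ 2) * (\sum_i y i ^+ 2).
Proof.
set A := \sum_i x i ^+ 2; set B := \sum_i y i ^+ 2; set C := \sum_i x i * y i.
have AB : \sum_i \sum_j (x i * y j) ^+ 2 = A * B.
  rewrite mulr_suml; apply: eq_bigr => i _; rewrite mulr_sumr.
  by apply: eq_bigr => j _; rewrite exprMn.
have BA : \sum_i \sum_j (x j * y i) ^+ 2 = A * B by rewrite exchange_big.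
have C2 : \sum_i \sum_j (x i * y j * (x j * y i)) = C ^+ 2.
  rewrite expr2 mulr_suml; apply: eq_bigr => i _; rewrite mulr_sumr.
  by apply: eq_bigr => j _; ring.
(* Lagrange's identity *)
have : \sum_i \sum_j (x i * y j - x j * y i) ^+ 2 = 2 * (A * B - C ^+ 2).
  transitivity (\sum_i (\sum_j (x i * y j) ^+ 2 + \sum_j (x j * y i) ^+ 2
                        - 2 * \sum_j (x i * y j * (x j * y i)))).
    apply: eq_bigr => i _; rewrite mulr_sumr -big_split -sumrB /=.
    by apply: eq_bigr => j _; ring.
  by rewrite sumrB big_split /= -mulr_sumr AB BA C2; ring.
have : 0 <= \sum_i \sum_j (x i * y j - x j * y i) ^+ 2.
  by do 2!(apply: sumr_ge0 => ? _); apply: sqr_ge0.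
lra.
Qed.

Lemma minkowski_sum x y :
  Num.sqrt (\sum_i (x i + y i) ^+ 2)
    <= Num.sqrt (\sum_i x i ^+ 2) + Num.sqrt (\sum_i y i ^+ 2).
Proof.
set A := \sum_i x i ^+ 2; set B := \sum_i y i ^+ 2; set C := \sum_i x i * y i.
have A0 : 0 <= A by rewrite sumr_ge0 // => i _; apply: sqr_ge0.
have B0 : 0 <= B by rewrite sumr_ge0 // => i _; apply: sqr_ge0.
have -> : \sum_i (x i + y i) ^+ 2 = A + 2 * C + B.
  by rewrite /A /B /C mulr_sumr -!big_split /=; apply: eq_bigr => i _; ring.
have C_le : C <= Num.sqrt A * Num.sqrt B.
  apply: (le_trans (ler_norm C)); rewrite -sqrtr_sqr -sqrtrM //.
  by rewrite ler_wsqrtr // cauchy_schwarz_sum.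
rewrite -[X in _ <= X]ger0_norm ?addr_ge0 ?sqrtr_ge0 // -sqrtr_sqr ler_wsqrtr //.
by rewrite sqrrD !sqr_sqrtr //; lra.
Qed.

End euclidean_norm.

Section gradient_mapping.
Variable R : realType.

Lemma proj_grad_step_inactive (lam g alpha : R) : 0 <= lam -> g <= 0 -> 0 < alpha ->
  alpha^-1 * (lam - Num.max (lam - alpha * g) 0) = g.
Proof.
move=> lam0 g0 a0; have : alpha * g <= 0 by rewrite mulr_ge0_le0 // ltW.
move=> ag0; rewrite max_l; last by lra.
by rewrite opprB addrC subrK mulKf ?gt_eqF.
Qed.

Lemma max_normr_sub_le_gradient_mapping (a eps lam nu alpha : R) :
  0 <= lam -> 0 <= nu -> 0 < alpha ->
  Num.max (`|a| - eps) 0 <=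
  Num.sqrt ((alpha^-1 * (lam - Num.max (lam - alpha * (a + eps)) 0)) ^+ 2
          + (alpha^-1 * (nu - Num.max (nu - alpha * (- a + eps)) 0)) ^+ 2).
Proof.
move=> lam0 nu0 a0.
have [le0|gt0] := leP (`|a| - eps) 0; first by rewrite sqrtr_ge0.
have le_sqrt (z w : R) : `|z| <= Num.sqrt (z ^+ 2 + w ^+ 2).
  by rewrite -sqrtr_sqr ler_wsqrtr // lerDl sqr_ge0.
have [a_ge0|a_lt0] := leP 0 a.
- rewrite ger0_norm // in gt0 *; rewrite [X in Num.sqrt X]addrC.
  apply: le_trans (le_sqrt _ _); rewrite proj_grad_step_inactive //; last by lra.
  by rewrite ler_normr; apply/orP; right; lra.
- rewrite ltr0_norm // in gt0 *.
  apply: le_trans (le_sqrt _ _); rewrite proj_grad_step_inactive //; last by lra.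
  by rewrite ler_normr; apply/orP; right; lra.
Qed.

End gradient_mapping.

Section derivative_from_remainder.
Variable R : realType.

Lemma derive1_eq_of_remainder (f g : R -> R) (a : R) :
  g @ (0 : R)^' --> (0 : R) ->
  (forall h, h != 0 -> `|f h - f 0 - h * a| <= `|h| * g h) -> derive1 f 0 = a.
Proof.
move=> g0 fg; apply: cvg_lim => //; apply/cvgrPdist_le => e e0.
move/cvgrPdist_le : g0 => /(_ e e0) ge.
near=> h.
have h0 : h != 0 by near: h; exact: nbhs_dnbhs_neq.
have hp : 0 < `|h| by rewrite normr_gt0.
have -> : a - h^-1 *: (f (h + 0) - f 0) = - (h^-1 * (f h - f 0 - h * a)).
  by rewrite addr0 /GRing.scale /=; field.
rewrite normrN normrM normfV (@le_trans _ _ (g h)) //.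
  by rewrite ler_pdivrMl // fg.
have : `|0 - g h| <= e by near: h; exact: ge.
by apply: le_trans; rewrite sub0r normrN ler_norm.
Unshelve. all: by end_near.
Qed.

Lemma cvg_expR_remainder (C k : R) :
  (fun h : R => C * (expR (k * `|h|) - 1)) @ (0 : R)^' --> (0 : R).
Proof.
have e0 : C * (expR (k * `|0 : R|) - 1) = 0 by rewrite normr0 mulr0 expR0 subrr mulr0.
rewrite -[X in _ --> X]e0; apply: cvg_within_filter; apply: cvgM; first exact: cvg_cst.
apply: cvgB; last exact: cvg_cst.
apply: (@cvg_comp _ _ _ (fun h => k * `|h|) expR); last exact: continuous_expR.
by apply: cvgM; [exact: cvg_cst | apply: cvg_norm; exact: cvg_id].
Qed.

End derivative_from_remainder.

Section expectation.
Context (R : realType) (dT : measure_display) (T : measurableType dT)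
  (P : probability T R).
Implicit Types (f g : T -> R) (c M : R).

Definition integrableR f := P.-integrable setT (EFin \o f).

Lemma integrableR_fin_num f : integrableR f -> (\int[P]_w (f w)%:E)%E \is a fin_num.
Proof. exact: integrable_fin_num. Qed.

Lemma ExE f : integrableR f -> (\int[P]_w (f w)%:E = (Ex P f)%:E)%E.
Proof. by move=> fi; rewrite /Ex fineK // integrableR_fin_num. Qed.

Lemma integrableR_le f g : measurable_fun setT f -> integrableR g ->
  (forall w, `|f w| <= g w) -> integrableR f.
Proof.
move=> mf gi fg; apply: (le_integrable _ _ _ gi) => //; first exact/measurable_EFinP.
by move=> w _ /=; rewrite lee_fin (le_trans (fg w)) // ler_norm.
Qed.

Lemma integrableR_cst c : integrableR (fun _ => c).
Proof. exact: finite_measure_integrable_cst. Qed.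

Lemma integrableR_bounded f M : measurable_fun setT f ->
  (forall w, `|f w| <= M) -> integrableR f.
Proof. by move=> mf fM; apply: integrableR_le mf (integrableR_cst M) fM. Qed.

Lemma integrableRD f g : integrableR f -> integrableR g ->
  integrableR (fun w => f w + g w).
Proof.
move=> fi gi; rewrite /integrableR (_ : _ \o _ = (EFin \o f) \+ (EFin \o g))%E.
  exact: integrableD.
by apply/funext => w /=; rewrite EFinD.
Qed.

Lemma integrableRZ c f : integrableR f -> integrableR (fun w => c * f w).
Proof.
move=> fi; rewrite /integrableR (_ : _ \o _ = (fun x => c%:E * (EFin \o f) x))%E.
  exact: integrableZl.
by apply/funext => w /=; rewrite EFinM.
Qed.

Lemma integrableRB f g : integrableR f -> integrableR g ->
  integrableR (fun w => f w - g w).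
Proof.
move=> fi gi; apply: integrableRD => //.
by under eq_fun do rewrite -mulN1r; apply: integrableRZ.
Qed.

Lemma integrableR_sum (I : Type) (r : seq I) (F : I -> T -> R) :
  (forall i, integrableR (F i)) -> integrableR (fun w => \sum_(i <- r) F i w).
Proof.
move=> Fi; elim: r => [|i r ih].
  by under eq_fun do rewrite big_nil; exact: integrableR_cst.
by under eq_fun do rewrite big_cons; exact: integrableRD.
Qed.

Lemma ExD f g : integrableR f -> integrableR g ->
  Ex P (fun w => f w + g w) = Ex P f + Ex P g.
Proof.
move=> fi gi; rewrite /Ex; under eq_integral do rewrite EFinD.
by rewrite integralD // fineD // integrableR_fin_num.
Qed.

Lemma ExZ c f : integrableR f -> Ex P (fun w => c * f w) = c * Ex P f.
Proof.
move=> fi; rewrite /Ex; under eq_integral do rewrite EFinM.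
by rewrite integralZl // fineM // integrableR_fin_num.
Qed.

Lemma ExB f g : integrableR f -> integrableR g ->
  Ex P (fun w => f w - g w) = Ex P f - Ex P g.
Proof.
move=> fi gi; have Ngi : integrableR (fun w => -1 * g w) by exact: integrableRZ.
under eq_fun do rewrite -mulN1r.
by rewrite ExD // ExZ // mulN1r.
Qed.

Lemma Ex_cst c : Ex P (fun _ => c) = c.
Proof. by rewrite /Ex integral_cst //= probability_setT mule1. Qed.

Lemma Ex_sum (I : Type) (r : seq I) (F : I -> T -> R) :
  (forall i, integrableR (F i)) ->
  Ex P (fun w => \sum_(i <- r) F i w) = \sum_(i <- r) Ex P (F i).
Proof.
move=> Fi; elim: r => [|i r ih].
  by under eq_fun do rewrite big_nil; rewrite Ex_cst big_nil.
under eq_fun do rewrite big_cons.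
by rewrite ExD ?ih ?big_cons // integrableR_sum.
Qed.

Lemma ler_Ex f g : integrableR f -> integrableR g ->
  (forall w, f w <= g w) -> Ex P f <= Ex P g.
Proof.
move=> fi gi fg; rewrite /Ex fine_le ?integrableR_fin_num //.
by apply: le_integral => // w _; rewrite lee_fin.
Qed.

Lemma Ex_ge0 f : (forall w, 0 <= f w) -> 0 <= Ex P f.
Proof.
by move=> f0; rewrite /Ex fine_ge0 // integral_ge0 // => w _; rewrite lee_fin.
Qed.

Lemma normr_Ex_le f M : integrableR f -> (forall w, `|f w| <= M) -> `|Ex P f| <= M.
Proof.
move=> fi fM; rewrite ler_norml; apply/andP; split.
- rewrite -[X in X <= _](Ex_cst (- M)) ler_Ex ?integrableR_cst // => w.
  by have := fM w; rewrite ler_norml => /andP[].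
- rewrite -[X in _ <= X](Ex_cst M) ler_Ex ?integrableR_cst // => w.
  by have := fM w; rewrite ler_norml => /andP[].
Qed.

(* Nonnegativity of the variance. *)
Lemma Ex_sqr_le f : integrableR f -> integrableR (fun w => f w ^+ 2) ->
  Ex P f ^+ 2 <= Ex P (fun w => f w ^+ 2).
Proof.
move=> fi f2i; set m := Ex P f.
have : 0 <= Ex P (fun w => (f w - m) ^+ 2) by apply: Ex_ge0 => w; exact: sqr_ge0.
have -> : (fun w => (f w - m) ^+ 2) = (fun w => f w ^+ 2 + ((- (2 * m)) * f w + m ^+ 2)).
  by apply/funext => w; ring.
rewrite ExD ?ExD ?ExZ ?Ex_cst -/m ?integrableRD ?integrableRZ ?integrableR_cst //.
lra.
Qed.

End expectation.

Section conditional_probability.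
Context (R : realType) (dT : measure_display) (T : measurableType dT)
  (P : probability T R) (dZ : measure_display) (Z : measurableType dZ)
  (Y : T -> Z) (h : Z -> R) (E : set T).
Hypotheses (mY : measurable_fun setT Y) (mh : measurable_fun setT h)
  (h01 : forall z, 0 <= h z <= 1) (mE : measurable E)
  (hY : forall A, measurable A ->
     (\int[P]_(w in Y @^-1` A) (h (Y w))%:E = P (Y @^-1` A `&` E))%E).

Let normr_indic_le1 (U : Type) (A : set U) (x : U) : `|\1_A x : R| <= 1.
Proof. by rewrite indicE; case: (x \in A); rewrite ?normr1 ?normr0. Qed.

Let normr_h_le1 z : `|h z| <= 1.
Proof. by have /andP[h0 h1] := h01 z; rewrite ger0_norm. Qed.

Let integrableR_indic_mul (A : set Z) (u : T -> R) : measurable A ->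
  measurable_fun setT u -> (forall w, `|u w| <= 1) ->
  integrableR P (fun w => \1_A (Y w) * u w).
Proof.
move=> mA mu u1; apply: (@integrableR_bounded _ _ _ P _ 1).
  by apply: measurable_funM => //; apply: measurableT_comp => //; exact: measurable_indic.
by move=> w; rewrite normrM -[1]mulr1 ler_pM.
Qed.

Lemma Ex_indic_mul_cond A : measurable A ->
  Ex P (fun w => \1_A (Y w) * h (Y w)) = Ex P (fun w => \1_A (Y w) * \1_E w).
Proof.
move=> mA; rewrite /Ex; congr fine.
have mYA : measurable (Y @^-1` A) by rewrite -[_ @^-1` _]setTI; exact: mY.
transitivity (\int[P]_(w in Y @^-1` A) (h (Y w))%:E)%E.
  rewrite [RHS]integral_mkcond epatch_indic; apply: eq_integral => w _ /=.
  by rewrite -EFinM mulrC.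
rewrite hY // -[X in P X](setIT (Y @^-1` A `&` E)) -integral_indic //; last exact: measurableI.
by apply: eq_integral => w _; rewrite indicI.
Qed.

Lemma nnsfun_bounded (k : {nnsfun Z >-> R}) : exists M, forall z, `|k z| <= M.
Proof.
pose r := finmap.enum_fset (fset_set (k @` setT)).
have kE z : k z = \sum_(i < size r) r`_i * \1_(k @^-1` [set r`_i]) z.
  exact: fimfunEord.
exists (\sum_(i < size r) `|r`_i|) => z; rewrite kE.
apply: le_trans (ler_norm_sum _ _ _) _; apply: ler_sum => i _.
by rewrite normrM -[X in _ <= X]mulr1 ler_wpM2l.
Qed.

Lemma Ex_nnsfun_mul_cond (k : {nnsfun Z >-> R}) :
  Ex P (fun w => k (Y w) * h (Y w)) = Ex P (fun w => k (Y w) * \1_E w).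
Proof.
pose r := finmap.enum_fset (fset_set (k @` setT)).
have mk i : measurable (k @^-1` [set r`_i]) by exact: measurable_funPTI.
have kE z : k z = \sum_(i < size r) r`_i * \1_(k @^-1` [set r`_i]) z.
  exact: fimfunEord.
have kYE (u : T -> R) : (fun w => k (Y w) * u w) =
    (fun w => \sum_(i < size r) r`_i * (\1_(k @^-1` [set r`_i]) (Y w) * u w)).
  apply/funext => w; rewrite kE mulr_suml.
  by apply: eq_bigr => i _; rewrite mulrA.
have mIE : measurable_fun setT (\1_E : T -> R) by exact: measurable_indic.
have mhY : measurable_fun setT (h \o Y) by exact: measurableT_comp.
rewrite !kYE !Ex_sum => [|i|i]; last 2 first.
- by apply/integrableRZ/integrableR_indic_mul.
- by apply/integrableRZ/integrableR_indic_mul.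
by apply: eq_bigr => i _; rewrite !ExZ ?integrableR_indic_mul // Ex_indic_mul_cond.
Qed.

(* Extend from simple functions to [g] by monotone convergence of an
   increasing simple approximation of [g]. *)
Lemma Ex_mul_cond (g : Z -> R) : measurable_fun setT g -> (forall z, 0 <= g z <= 1) ->
  Ex P (fun w => g (Y w) * h (Y w)) = Ex P (fun w => g (Y w) * \1_E w).
Proof.
move=> mg g01.
have mG : measurable_fun setT (EFin \o g) by apply/measurable_EFinP.
pose k := nnsfun_approx measurableT mG.
have G0 z : setT z -> (0 <= (EFin \o g) z)%E.
  by move=> _; rewrite lee_fin; case/andP: (g01 z).
have int_lim (u : T -> R) : measurable_fun setT u -> (forall w, 0 <= u w <= 1) ->
    (\int[P]_w (g (Y w) * u w)%:E = limn (fun n => \int[P]_w (k n (Y w) * u w)%:E))%E.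
  move=> mu u01; rewrite -monotone_convergence //.
  - apply: eq_integral => w _; apply/esym/cvg_lim => //.
    under eq_fun do rewrite EFinM; rewrite EFinM; apply: cvgeZr => //.
    exact: (@cvg_nnsfun_approx _ _ _ _ measurableT _ mG G0 (Y w) I).
  - move=> n; apply/measurable_EFinP; apply: measurable_funM => //.
    exact: measurableT_comp.
  - by move=> n w _; rewrite lee_fin mulr_ge0 //; case/andP: (u01 w).
  - move=> w _ m n mn; rewrite lee_fin ler_wpM2r //; first by case/andP: (u01 w).
    exact/lefP/nd_nnsfun_approx.
have Ex_k (u : T -> R) n : measurable_fun setT u -> (forall w, 0 <= u w <= 1) ->
    (\int[P]_w (k n (Y w) * u w)%:E = (Ex P (fun w => k n (Y w) * u w))%:E)%E.
  move=> mu u01; have [M kM] := nnsfun_bounded (k n).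
  rewrite ExE //; apply: (@integrableR_bounded _ _ _ P _ M).
    by apply: measurable_funM => //; exact: measurableT_comp.
  move=> w; rewrite normrM -[M]mulr1 ler_pM //.
  by case/andP: (u01 w) => u0 u1; rewrite ger0_norm.
have mhY : measurable_fun setT (h \o Y) by exact: measurableT_comp.
have mIE : measurable_fun setT (\1_E : T -> R) by exact: measurable_indic.
have IE01 w : 0 <= (\1_E w : R) <= 1.
  by rewrite indicE; case: (w \in E); rewrite /= ?lexx ?ler01.
have hY01 w : 0 <= (h \o Y) w <= 1 by exact: h01.
rewrite /Ex (int_lim _ mhY hY01) (int_lim _ mIE IE01).
congr (fine (limn _)); apply/funext => n.
by rewrite (Ex_k _ _ mhY hY01) (Ex_k _ _ mIE IE01) Ex_nnsfun_mul_cond.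
Qed.

End conditional_probability.

Section weighted_sum_of_squares.
Context (R : realType) (dT : measure_display) (T : measurableType dT)
  (P : probability T R) (I J : finType) (q : I -> T -> R) (D : J -> T -> R) (C : R).
Hypotheses (mq : forall i, measurable_fun setT (q i)) (q0 : forall i w, 0 <= q i w)
  (q1 : forall w, \sum_i q i w = 1)
  (mD : forall j, measurable_fun setT (D j)) (DC : forall j w, `|D j w| <= C).

Let q_le1 i w : q i w <= 1.
Proof. by rewrite -(q1 w) (bigD1 i) //= lerDl sumr_ge0. Qed.

Let normr_q_le1 i w : `|q i w| <= 1.
Proof. by rewrite ger0_norm ?q0 ?q_le1. Qed.

Let normr_D2_le j w : `|D j w ^+ 2| <= C ^+ 2.
Proof. by rewrite normrX lerXn2r ?nnegrE ?(le_trans _ (DC j w)). Qed.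

Let integrableR_qD i j : integrableR P (fun w => q i w * D j w).
Proof.
apply: (@integrableR_bounded _ _ _ P _ C); first exact: measurable_funM.
by move=> w; rewrite normrM -[C]mul1r ler_pM.
Qed.

Let integrableR_qD2 i j : integrableR P (fun w => q i w * D j w ^+ 2).
Proof.
apply: (@integrableR_bounded _ _ _ P _ (C ^+ 2)).
  by apply: measurable_funM => //; exact: measurable_funX.
by move=> w; rewrite normrM -[C ^+ 2]mul1r ler_pM.
Qed.

Let integrableR_qD_sqr i j : integrableR P (fun w => (q i w * D j w) ^+ 2).
Proof.
apply: (@integrableR_bounded _ _ _ P _ (C ^+ 2)).
  by apply: measurable_funX; exact: measurable_funM.
by move=> w; rewrite exprMn normrM -[C ^+ 2]mul1r ler_pM // normrX exprn_ile1.
Qed.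

Let integrableR_D2 j : integrableR P (fun w => D j w ^+ 2).
Proof.
apply: (@integrableR_bounded _ _ _ P _ (C ^+ 2)) => //; exact: measurable_funX.
Qed.

Lemma sum_sqr_Ex_weighted_le :
  \sum_i \sum_j Ex P (fun w => q i w * D j w) ^+ 2 <= Ex P (fun w => \sum_j D j w ^+ 2).
Proof.
apply: (@le_trans _ _ (\sum_i \sum_j Ex P (fun w => q i w * D j w ^+ 2))).
  apply: ler_sum => i _; apply: ler_sum => j _.
  apply: le_trans (Ex_sqr_le (integrableR_qD i j) (integrableR_qD_sqr i j)) _.
  apply: ler_Ex => // w.
  by rewrite exprMn ler_wpM2r ?sqr_ge0 // expr2 ler_piMr ?q_le1.
rewrite exchange_big /= Ex_sum //.
apply: ler_sum => j _; rewrite -Ex_sum //.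
apply: ler_Ex => // [|w]; first exact: integrableR_sum.
by rewrite -mulr_suml q1 mul1r.
Qed.

End weighted_sum_of_squares.

Section model.
Context (R : realType) (dT : measure_display) (T : measurableType dT)
  (P : probability T R) (d K L : nat) (X : T -> d.-tuple R) (S : T -> 'I_K)
  (tau : 'I_K -> d.-tuple R -> R) (etah : d.-tuple R -> R)
  (tauh : 'I_K -> d.-tuple R -> R) (B beta : R) (eps p : 'I_K -> R).
Hypotheses (mX : measurable_fun setT X) (mS : forall s, measurable (S @^-1` [set s]))
  (p0 : forall s, 0 < p s)
  (mtau : forall s, measurable_fun setT (tau s)) (tau01 : forall s x, 0 <= tau s x <= 1)
  (tau_cond : forall s A, measurable A ->
     (\int[P]_(w in X @^-1` A) (tau s (X w))%:E
       = P (X @^-1` A `&` S @^-1` [set s]))%E)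
  (beta0 : 0 < beta) (metah : measurable_fun setT etah)
  (mtauh : forall s, measurable_fun setT (tauh s)) (tauh01 : forall s x, 0 <= tauh s x <= 1)
  (etah_sqr : P.-integrable setT (fun w => ((etah (X w)) ^+ 2)%:E)).

Local Notation N := (2 * L + 1)%N.
Implicit Types M V : 'M[R]_(N, K).
Local Notation score := (scorev B p etah tauh).
Local Notation pi := (pihat B beta p etah tauh).
Local Notation t_hat := (that p tauh).
Local Notation F := (Fhat P B beta eps p etah tauh X).
Local Notation t_true s x := (1 - tau s x / p s).

Let grid0 : 'I_N := @Ordinal N 0 ltac:(by rewrite addn1).

Lemma measurable_that s : measurable_fun setT (t_hat s).
Proof. by apply: measurable_funB => //; apply: measurable_funM. Qed.

Lemma measurable_scorev M V l : measurable_fun setT (fun x => score M V x l).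
Proof.
apply: measurable_funB.
  by apply: measurable_sum => s; apply: measurable_funM => //; exact: measurable_that.
by apply: measurable_funX; apply: measurable_funB.
Qed.

Let measurable_sum_expR_score M V : measurable_fun setT
  (fun x => \sum_(l < N) expR (beta * score M V x l)).
Proof.
apply: measurable_sum => l; apply: measurableT_comp; first exact: measurable_expR.
by apply: measurable_funM => //; exact: measurable_scorev.
Qed.

Lemma measurable_pihat M V l : measurable_fun setT (pi M V l).
Proof.
rewrite (_ : pi M V l = fun x => expR (beta * score M V x l)
   * expR (- ln (\sum_(l' < N) expR (beta * score M V x l')))).
  apply: measurable_funM; apply: measurableT_comp; try exact: measurable_expR.
    by apply: measurable_funM => //; exact: measurable_scorev.
  apply: measurableT_comp => //; apply: measurableT_comp; first exact: measurable_ln.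
  exact: measurable_sum_expR_score.
by apply/funext => x; rewrite /pihat /softmax expRN lnK // posrE (sum_expR_gt0 _ l).
Qed.

Lemma pihat_ge0 M V l x : 0 <= pi M V l x.
Proof. exact: softmax_ge0. Qed.

Lemma pihat_le1 M V l x : pi M V l x <= 1.
Proof. exact: softmax_le1. Qed.

Lemma sum_pihat M V x : \sum_(l < N) pi M V l x = 1.
Proof. exact: softmax_sum1 grid0. Qed.

Definition t_bound := \sum_(s < K) (1 + (p s)^-1).

Lemma t_bound_ge0 : 0 <= t_bound.
Proof. by rewrite sumr_ge0 // => s _; rewrite addr_ge0 // invr_ge0 ltW. Qed.

Lemma normr_1_sub_div_le s (u : R) : 0 <= u <= 1 -> `|1 - u / p s| <= t_bound.
Proof.
move=> /andP[u0 u1]; have pV0 : 0 < (p s)^-1 by rewrite invr_gt0.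
apply: (@le_trans _ _ (1 + (p s)^-1)).
  rewrite (le_trans (ler_normB _ _)) // normr1 lerD2l normrM ger0_norm //.
  by rewrite gtr0_norm // ler_piMl // ltW.
by rewrite /t_bound (bigD1 s) //= lerDl sumr_ge0 // => i _; rewrite addr_ge0 // invr_ge0 ltW.
Qed.

Lemma normr_that_le s x : `|t_hat s x| <= t_bound.
Proof. exact: normr_1_sub_div_le. Qed.

Lemma normr_t_true_le s x : `|t_true s x| <= t_bound.
Proof. exact: normr_1_sub_div_le. Qed.

Lemma integrableR_pihat_mul M V l (u : T -> R) (C : R) : measurable_fun setT u ->
  (forall w, `|u w| <= C) -> integrableR P (fun w => pi M V l (X w) * u w).
Proof.
move=> mu uC; apply: (@integrableR_bounded _ _ _ P _ C).
  by apply: measurable_funM => //; apply: measurableT_comp => //; exact: measurable_pihat.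
move=> w; rewrite normrM -[C]mul1r ler_pM // ger0_norm ?pihat_ge0 ?pihat_le1 //.
Qed.

Lemma measurable_that_X s : measurable_fun setT (fun w => t_hat s (X w)).
Proof. by apply: measurableT_comp => //; exact: measurable_that. Qed.

Lemma measurable_t_true_X s : measurable_fun setT (fun w => t_true s (X w)).
Proof.
apply: measurable_funB => //; apply: measurable_funM => //; exact: measurableT_comp.
Qed.

Lemma Ufair_pihat M V s l : Ufair P p X S (pi M V) s l
   = `|Ex P (fun w => pi M V l (X w) * t_true s (X w))|.
Proof.
have mpi : measurable_fun setT (pi M V l) by exact: measurable_pihat.
have pi01 x : 0 <= pi M V l x <= 1 by rewrite pihat_ge0 pihat_le1.
have normr_tau_le1 w : `|tau s (X w)| <= 1.
  by have /andP[t0 t1] := tau01 s (X w); rewrite ger0_norm.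
have integrable_pi_tau : integrableR P (fun w => pi M V l (X w) * tau s (X w)).
  by apply: integrableR_pihat_mul normr_tau_le1; exact: measurableT_comp.
have integrable_pi : integrableR P (fun w => pi M V l (X w)).
  apply: (@integrableR_bounded _ _ _ P _ 1); first exact: measurableT_comp.
  by move=> w; rewrite ger0_norm ?pihat_ge0 ?pihat_le1.
rewrite /Ufair.
have -> : Ex P (fun w => pi M V l (X w) * Defs.indic R (S w == s))
    = Ex P (fun w => pi M V l (X w) * tau s (X w)).
  rewrite (Ex_mul_cond mX (mtau s) (tau01 s) (mS s) (tau_cond s) mpi pi01).
  congr (Ex P _); apply/funext => w; congr (_ * _).
  rewrite /Defs.indic indicE; case: eqP => [e|ne]; first by rewrite mem_set.
  by rewrite memNset.
rewrite (_ : (fun w => _ * t_true s (X w)) = fun w =>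
    pi M V l (X w) - (p s)^-1 * (pi M V l (X w) * tau s (X w))); last first.
  by apply/funext => w; ring.
by rewrite ExB ?ExZ ?integrableRZ // -normrN; congr `|_|; ring.
Qed.

Lemma normr_scorev_le M V x l : `|score M V x l| <=
  \sum_(s < K) `|M l s - V l s| * t_bound + 2 * etah x ^+ 2 + 2 * gridv B l ^+ 2.
Proof.
rewrite (le_trans (ler_normB _ _)) // -addrA lerD //.
  rewrite (le_trans (ler_norm_sum _ _ _)) // ler_sum // => s _.
  by rewrite normrM ler_wpM2l // normr_that_le.
rewrite /rhat ger0_norm ?sqr_ge0 //.
by have := sqr_ge0 (etah x + gridv B l); rewrite sqrrD sqrrB; lra.
Qed.

Lemma integrableR_LSE M V : integrableR P (fun w => LSE beta (score M V (X w))).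
Proof.
apply: (@integrableR_le _ _ _ P _ (fun w => beta^-1 * ln N%:R +
   \sum_(l < N) (\sum_(s < K) `|M l s - V l s| * t_bound
                 + 2 * etah (X w) ^+ 2 + 2 * gridv B l ^+ 2))).
- apply: (measurableT_comp (f := fun x => LSE beta (score M V x))) => //.
  apply: measurable_funM => //; apply: measurableT_comp; first exact: measurable_ln.
  exact: measurable_sum_expR_score.
- apply: integrableRD; first exact: integrableR_cst.
  apply: integrableR_sum => l; apply: integrableRD; last exact: integrableR_cst.
  by apply: integrableRD; [exact: integrableR_cst | exact: integrableRZ].
- move=> w; rewrite (le_trans (normr_LSE_le _ grid0 beta0)) // lerD2l.
  by rewrite ler_sum // => l _; exact: normr_scorev_le.
Qed.

Lemma scorev_shift M V M' V' l0 s0 k x l :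
  M' - V' = M - V + k *: delta_mx l0 s0 ->
  score M' V' x l = score M V x l + (l == l0)%:R * (k * t_hat s0 x).
Proof.
move=> eD; have eD_ls s : M' l s - V' l s = M l s - V l s + k * delta_mx l0 s0 l s.
  by move/matrixP: eD => /(_ l s); rewrite !mxE.
rewrite /scorev (eq_bigr _ (fun s _ => congr1 (fun a => a * t_hat s x) (eD_ls s))).
rewrite (bigD1 s0) //= [in RHS](bigD1 s0) //= !mxE eqxx andbT.
rewrite (eq_bigr (fun s => (M l s - V l s) * t_hat s x)); last first.
  by move=> s /negPf ns; rewrite mxE ns andbF mulr0 addr0.
by case: (l == l0); ring.
Qed.

Lemma sum_eps_shift M V M' V' l0 s0 h :
  M' + V' = M + V + h *: delta_mx l0 s0 ->
  \sum_(l < N) \sum_(s < K) (M' l s + V' l s) * eps s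
  = \sum_(l < N) \sum_(s < K) (M l s + V l s) * eps s + h * eps s0.
Proof.
move=> eS; have eS_ls l s : M' l s + V' l s = M l s + V l s + h * delta_mx l0 s0 l s.
  by move/matrixP: eS => /(_ l s); rewrite !mxE.
under eq_bigr do under eq_bigr do rewrite eS_ls mulrDl.
under eq_bigr do rewrite big_split /=.
rewrite big_split /=; congr (_ + _).
rewrite (bigD1 l0) //= [X in _ + X]big1 => [|l /negPf nl]; last first.
  by rewrite big1 // => s _; rewrite mxE nl mulr0 mul0r.
rewrite addr0 (bigD1 s0) //= [X in _ + X]big1 => [|s /negPf ns]; last first.
  by rewrite mxE eqxx ns mulr0 mul0r.
by rewrite addr0 mxE !eqxx mulr1.
Qed.

Lemma Fhat_shift_err M V M' V' l0 s0 k h :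
  M' - V' = M - V + k *: delta_mx l0 s0 -> M' + V' = M + V + h *: delta_mx l0 s0 ->
  `|F M' V' - F M V - (k * Ex P (fun w => pi M V l0 (X w) * t_hat s0 (X w)) + h * eps s0)|
    <= `|k| * (t_bound * (expR (beta * t_bound * `|k|) - 1)).
Proof.
move=> eD eS; rewrite /Fhat (sum_eps_shift eS).
set lin := \sum_(l < N) _.
have -> : forall a b c, a + (lin + h * eps s0) - (b + lin) - (c + h * eps s0) = a - b - c.
  by move=> a b c; ring.
have ipt : integrableR P (fun w => pi M V l0 (X w) * t_hat s0 (X w)).
  exact: integrableR_pihat_mul (measurable_that_X s0) (fun w => normr_that_le s0 (X w)).
have iD := integrableRB (integrableR_LSE M' V') (integrableR_LSE M V).
have ikpt := integrableRZ k ipt.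
rewrite -(ExB (integrableR_LSE _ _) (integrableR_LSE _ _)) -(ExZ k ipt) -(ExB iD ikpt).
apply: normr_Ex_le => [|w]; first exact: integrableRB.
have -> : score M' V' (X w) = fun l => score M V (X w) l + (l == l0)%:R * (k * t_hat s0 (X w)).
  by apply/funext => l; exact: scorev_shift.
rewrite LSE_shift //.
have -> : k * (pi M V l0 (X w) * t_hat s0 (X w))
    = softmax (fun i => beta * score M V (X w) i) l0 * (k * t_hat s0 (X w)).
  exact: mulrCA.
have q01 : 0 <= softmax (fun i => beta * score M V (X w) i) l0 <= 1.
  by rewrite softmax_ge0 softmax_le1.
apply: le_trans (ln_mix_expR_err _ q01 beta0) _.
have ky : `|k * t_hat s0 (X w)| <= `|k| * t_bound by rewrite normrM ler_wpM2l ?normr_that_le.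
rewrite mulrA; apply: ler_pM => //.
  by rewrite subr_ge0 -expR0 ler_expR mulr_ge0 // ltW.
by rewrite lerD2r ler_expR -mulrA ler_pM2l // [t_bound * _]mulrC.
Qed.

Lemma dF_lamE M V l s :
  dF_lam P B beta eps p etah tauh X M V l s
  = Ex P (fun w => pi M V l (X w) * t_hat s (X w)) + eps s.
Proof.
apply: derive1_eq_of_remainder (cvg_expR_remainder t_bound (beta * t_bound)) _ => h _.
rewrite scale0r addr0 mulrDr.
by apply: Fhat_shift_err; rewrite addrAC.
Qed.

Lemma dF_nuE M V l s :
  dF_nu P B beta eps p etah tauh X M V l s
  = - Ex P (fun w => pi M V l (X w) * t_hat s (X w)) + eps s.
Proof.
apply: derive1_eq_of_remainder (cvg_expR_remainder t_bound (beta * t_bound)) _ => h _.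
rewrite scale0r addr0 mulrDr mulrN -mulNr -(normrN h).
apply: Fhat_shift_err; last by rewrite addrA.
by rewrite opprD addrA scaleNr.
Qed.

Section nonnegative_multipliers.
Variables (Lam V : 'M[R]_(N, K)) (alpha : R).
Hypotheses (Lam0 : forall l s, 0 <= Lam l s) (V0 : forall l s, 0 <= V l s)
  (alpha0 : 0 < alpha).

Let t_err s w := t_hat s (X w) - t_true s (X w).
Let measurable_t_err s : measurable_fun setT (t_err s).
Proof. exact: measurable_funB (measurable_that_X s) (measurable_t_true_X s). Qed.

Let normr_t_err_le s w : `|t_err s w| <= t_bound + t_bound.
Proof. by rewrite (le_trans (ler_normB _ _)) // lerD ?normr_that_le ?normr_t_true_le. Qed.

Let pi_err l s := Ex P (fun w => pi Lam V l (X w) * t_err s w).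
Let G l s := Num.sqrt (Gmap_lam P B beta eps p etah tauh X alpha Lam V l s ^+ 2
                     + Gmap_nu P B beta eps p etah tauh X alpha Lam V l s ^+ 2).

Lemma max_Ufair_sub_le l s :
  Num.max (Ufair P p X S (pi Lam V) s l - eps s) 0 <= G l s + `|pi_err l s|.
Proof.
rewrite Ufair_pihat; set a := Ex P (fun w => pi Lam V l (X w) * t_hat s (X w)).
have -> : Ex P (fun w => pi Lam V l (X w) * t_true s (X w)) = a - pi_err l s.
  rewrite /a /pi_err -ExB; first by congr (Ex P _); apply/funext => w; rewrite /t_err; ring.
    exact: integrableR_pihat_mul (measurable_that_X s) (fun w => normr_that_le s (X w)).
  exact: integrableR_pihat_mul (measurable_t_err s) (normr_t_err_le s).
have aG : Num.max (`|a| - eps s) 0 <= G l s.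
  rewrite /G /Gmap_lam /Gmap_nu dF_lamE dF_nuE.
  exact: max_normr_sub_le_gradient_mapping.
have := ler_normB a (pi_err l s).
have : `|a| - eps s <= Num.max (`|a| - eps s) 0 by rewrite le_max lexx.
rewrite ge_max addr_ge0 ?sqrtr_ge0 // andbT; lra.
Qed.

Lemma sum_sqr_pi_err_le :
  \sum_(l < N) \sum_(s < K) `|pi_err l s| ^+ 2 <= Ex P (fun w => \sum_(s < K) t_err s w ^+ 2).
Proof.
rewrite (eq_bigr (fun l => \sum_(s < K) pi_err l s ^+ 2)) => [|l _]; last first.
  by apply: eq_bigr => s _; rewrite real_normK ?num_real.
apply: (@sum_sqr_Ex_weighted_le _ _ _ P _ _ _ _ (t_bound + t_bound)) => [l|l w|w|s|s w].
- by apply: measurableT_comp => //; exact: measurable_pihat.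
- exact: pihat_ge0.
- exact: sum_pihat.
- exact: measurable_t_err.
- exact: normr_t_err_le.
Qed.

Lemma sqrt_sum_max_Ufair_sub_le :
  Num.sqrt (\sum_(l < N) \sum_(s < K)
     (Num.max (Ufair P p X S (pi Lam V) s l - eps s) 0) ^+ 2)
  <= Gmap_norm P B beta eps p etah tauh X alpha Lam V
     + Num.sqrt (Ex P (fun w => \sum_(s < K) t_err s w ^+ 2)).
Proof.
apply: (@le_trans _ _ (Num.sqrt (\sum_(l < N) \sum_(s < K) (G l s + `|pi_err l s|) ^+ 2))).
  rewrite ler_wsqrtr // ler_sum // => l _; rewrite ler_sum // => s _.
  by rewrite !expr2 ler_pM ?le_max ?lexx ?orbT ?max_Ufair_sub_le.
rewrite (pair_bigA _ (fun l s => (G l s + `|pi_err l s|) ^+ 2)) /=.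
apply: le_trans (minkowski_sum (fun ls => G ls.1 ls.2) (fun ls => `|pi_err ls.1 ls.2|)) _.
rewrite -(pair_bigA _ (fun l s => G l s ^+ 2)) -(pair_bigA _ (fun l s => `|pi_err l s| ^+ 2)).
rewrite lerD ?ler_wsqrtr ?sum_sqr_pi_err_le // ler_sum // => l _; rewrite ler_sum // => s _.
by rewrite sqr_sqrtr // addr_ge0 ?sqr_ge0.
Qed.

End nonnegative_multipliers.
End model.

Theorem lemma5p1 (R : realType) (dT : measure_display) (T : measurableType dT)
  (P : probability T R) (d K L : nat)
  (X : T -> d.-tuple R) (S : T -> 'I_K) (Y : T -> R)
  (tau : 'I_K -> d.-tuple R -> R)
  (etah : d.-tuple R -> R) (tauh : 'I_K -> d.-tuple R -> R)
  (B beta alpha : R) (eps : 'I_K -> R) (Lam V : 'M[R]_(2 * L + 1, K)) :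
  (2 <= K)%N -> (1 <= d)%N -> (1 <= L)%N ->
  measurable_fun setT X -> measurable_fun setT Y ->
  (forall s, measurable (S @^-1` [set s])) ->
  (* p_s = P(S = s) > 0 *)
  (forall s, 0 < fine (P (S @^-1` [set s]))) ->
  (* tau_s(x) = P(S = s | X = x) *)
  (forall s, measurable_fun setT (tau s)) ->
  (forall s x, 0 <= tau s x <= 1) ->
  (forall s A, measurable A ->
     (\int[P]_(w in X @^-1` A) (tau s (X w))%:E
       = P (X @^-1` A `&` S @^-1` [set s]))%E) ->
  0 < B -> 0 < beta ->
  (forall s, 0 <= eps s <= 1) ->
  measurable_fun setT etah ->
  (forall s, measurable_fun setT (tauh s)) ->
  (forall s x, 0 <= tauh s x <= 1) ->
  P.-integrable setT (fun w => ((etah (X w)) ^+ 2)%:E) ->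
  (forall l s, 0 <= Lam l s) -> (forall l s, 0 <= V l s) ->
  0 < alpha ->
  let p := fun s => fine (P (S @^-1` [set s])) in
  let t := fun s x => 1 - tau s x / p s in
  Num.sqrt (\sum_(l < 2 * L + 1) \sum_(s < K)
     (Num.max (Ufair P p X S (pihat B beta p etah tauh Lam V) s l - eps s) 0) ^+ 2)
  <= Gmap_norm P B beta eps p etah tauh X alpha Lam V
     + Num.sqrt (Ex P (fun w => \sum_(s < K)
                   (that p tauh s (X w) - t s (X w)) ^+ 2)).
Proof.
move=> _ _ _ mX _ mS p0 mtau tau01 tau_cond _ beta0 _ metah mtauh tauh01 etah_sqr.
move=> Lam0 V0 alpha0; exact: sqrt_sum_max_Ufair_sub_le.
Qed.
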